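(* Assume agents' preferences over sets of judgments are decisive. Then every judgment aggregation rule that satisfies participation also satisfies antipodal strategyproofness.
   Context: An agenda is a finite nonempty list $\Phi=(\phi_1,\dots,\phi_m)$ of propositional formulas; a judgment is $J\in\{0,1\}^m$, $J(\phi_k)$ its $k$-th entry; the antipodal judgment $\overline{J}$ accepts exactly the issues rejected by $J$. $\mathcal{J}(\Phi)\subseteq\{0,1\}^m$ is the nonempty set of admissible judgments. For a finite set of agents $N$, a profile is $\mathbf{P}=(J_1,\dots,J_n)\in\mathcal{J}(\Phi)^n$; $\mathbf{P}_{-i}$ is $\mathbf{P}$ with agent $i$'s judgment removed and $(\mathbf{P}_{-i},J)$ is $\mathbf{P}_{-i}$ with $J$ added as agent $i$'s judgment. A rule $F$ maps every profile (every finite group of agents, every agenda) to a nonempty $F(\mathbf{P})\subseteq\mathcal{J}(\Phi)$. Hamming distance $H(J,J')=\sum_k|J(\phi_k)-J'(\phi_k)|$. Agent $i$ with truthful judgment $J_i$ has $J\succ_i J'$ iff $H(J_i,J)<H(J_i,J')$. The preference over sets is decisive: for $X,Y\subseteq\mathcal{J}(\Phi)$, $X\mathrel{\mathring{\succ}}_i Y$ iff there exist $J\in X$, $J'\in Y$ with $J\succ_i J'$ and $\{J,J'\}\not\subseteq X\cap Y$. $F$ satisfies participation if there is no profile $\mathbf{P}$ and agent $i$ with $F(\mathbf{P}_{-i})\mathrel{\mathring{\succ}}_i F(\mathbf{P})$. $F$ satisfies antipodal strategyproofness if there is no profile $\mathbf{P}$ and agent $i$ with $F(\mathbf{P}_{-i},\overline{J_i})\mathrel{\mathring{\succ}}_i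 F(\mathbf{P})$. *)

From mathcomp Require Import all_boot all_order.
From mathcomp Require Import finmap.
Set Implicit Arguments. Unset Strict Implicit. Unset Printing Implicit Defensive.
Local Open Scope fmap_scope.

(* A judgment on an agenda with m issues: a vector in {0,1}^m, encoded as an
   m-tuple of booleans (true = accept). *)
Definition judgment (m : nat) := m.-tuple bool.

Definition hamming (m : nat) (J J' : judgment m) : nat :=
  \sum_(k < m) (tnth J k != tnth J' k).

Definition antipodal (m : nat) (J : judgment m) : judgment m :=
  [tuple negb (tnth J k) | k < m].

Definition jpref (m : nat) (Ji J J' : judgment m) : bool :=
  hamming Ji J < hamming Ji J'.

Definition dec_set_pref (m : nat) (Ji : judgment m) (X Y : {set judgment m}) : Prop :=
  exists J J', [/\ J \in X, J' \in Y, jpref Ji J J' &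
                   ~~ ((J \in X :&: Y) && (J' \in X :&: Y))].

(* A profile for a finite group of agents N (agents are natural numbers):
   a finite map from N to judgments.  P.[~ i] is P_{-i}; P.[i <- J] is
   (P_{-i}, J). *)
Definition profile (m : nat) := {fmap nat -> judgment m}.

Definition admissible_profile (m : nat) (Adm : {set judgment m}) (P : profile m) : Prop :=
  forall k J, P.[? k] = Some J -> J \in Adm.

(* Agendas are drawn from an arbitrary type Ag; agenda a has (num a) issues
   and admissible set adm a. *)
Definition is_rule (Ag : Type) (num : Ag -> nat)
  (adm : forall a, {set judgment (num a)})
  (F : forall a, profile (num a) -> {set judgment (num a)}) : Prop :=
  forall a (P : profile (num a)), admissible_profile (adm a) P ->
    F a P != set0 /\ F a P \subset adm a.

Definition participation (Ag : Type) (num : Ag -> nat)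
  (adm : forall a, {set judgment (num a)})
  (F : forall a, profile (num a) -> {set judgment (num a)}) : Prop :=
  forall a (P : profile (num a)) (i : nat) (Ji : judgment (num a)),
    admissible_profile (adm a) P -> P.[? i] = Some Ji ->
    ~ dec_set_pref Ji (F a P.[~ i]) (F a P).

Definition antipodal_sp (Ag : Type) (num : Ag -> nat)
  (adm : forall a, {set judgment (num a)})
  (F : forall a, profile (num a) -> {set judgment (num a)}) : Prop :=
  forall a (P : profile (num a)) (i : nat) (Ji : judgment (num a)),
    admissible_profile (adm a) P -> P.[? i] = Some Ji ->
    antipodal Ji \in adm a ->
    ~ dec_set_pref Ji (F a P.[i <- antipodal Ji]) (F a P).

From mathcomp Require Import all_boot all_order.
From mathcomp Require Import finmap.
From mathcomp Require Import zify.
Set Implicit Arguments. Unset Strict Implicit. Unset Printing Implicit Defensive.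
Local Open Scope fmap_scope.

(* Fix a profile P, an agent i with judgment Ji, and let Q = (P_{-i}, ~Ji)
   be the profile in which i reports the antipodal judgment ~Ji.  Write
   S = F(P_{-i}), T = F(P), U = F(Q); note Q_{-i} = P_{-i}.
   1. Hamming distances to Ji and to ~Ji add up to m, so the preference of
      an agent with truthful judgment ~Ji is the reverse of that of Ji.
   2. Participation at P says S is not decisively preferred to T by Ji;
      participation at Q says S is not decisively preferred to U by ~Ji,
      i.e. (by 1) whenever Y in U beats X in S for Ji, both lie in S and U.
   3. A purely set-theoretic lemma: if S is nonempty and both conditions of
      step 2 hold, then U is not decisively preferred to T by Ji.  Given a
      witness A in U beating B in T, comparing an element C of S with B
      forces A into S, then A into T and B into S, then B into U, so that
      A and B both lie in U :&: T, contradicting decisiveness.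
   The theorem follows by applying 3 to the sets S, T, U above; S is
   nonempty because F is a rule and P_{-i} is an admissible profile. *)

(* Disagreeing with J or with its antipode: each issue counts exactly once. *)
Lemma hamming_antipodal m (J X : judgment m) :
  hamming J X + hamming (antipodal J) X = m.
Proof.
rewrite /hamming -big_split /= -[RHS]card_ord -sum1_card.
apply: eq_bigr => k _; rewrite /antipodal tnth_map tnth_ord_tuple.
by case: (tnth J k); case: (tnth X k).
Qed.

Lemma jpref_antipodal m (J X Y : judgment m) :
  jpref (antipodal J) X Y = jpref J Y X.
Proof.
rewrite /jpref; have := hamming_antipodal J X; have := hamming_antipodal J Y.
by move=> hY hX; apply/idP/idP => /ltP ?; apply/ltP; lia.
Qed.

Lemma not_dec_set_pref m (Ji : judgment m) (X Y : {set judgment m})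
    (J J' : judgment m) :
  ~ dec_set_pref Ji X Y -> J \in X -> J' \in Y -> jpref Ji J J' ->
  (J \in Y) && (J' \in X).
Proof.
move=> noPref JX J'Y JJ'; apply/negPn/negP => notBoth; apply: noPref.
exists J, J'; split => //; rewrite !inE JX J'Y /=.
by move: notBoth; case: (J \in Y); case: (J' \in X).
Qed.

Lemma not_dec_set_pref_antipodal m (Ji : judgment m)
    (X Y : {set judgment m}) (J J' : judgment m) :
  ~ dec_set_pref (antipodal Ji) X Y -> J \in X -> J' \in Y -> jpref Ji J' J ->
  (J \in Y) && (J' \in X).
Proof. by move=> noPref JX J'Y; rewrite -jpref_antipodal; apply: not_dec_set_pref. Qed.

Lemma no_pref_through_antipode m (Ji : judgment m)
    (S T U : {set judgment m}) :
  S != set0 ->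
  ~ dec_set_pref Ji S T ->
  ~ dec_set_pref (antipodal Ji) S U ->
  ~ dec_set_pref Ji U T.
Proof.
case/set0Pn=> C CS noST noSU [A [B [AU BT AB notBoth]]].
have AS : A \in S.
  have [CB | BC] := ltnP (hamming Ji C) (hamming Ji B).
  - have /andP [_ BS] := not_dec_set_pref noST CS BT CB.
    by have /andP [_ ->] := not_dec_set_pref_antipodal noSU BS AU AB.
  - have AC : jpref Ji A C by apply: leq_trans BC.
    by have /andP [_ ->] := not_dec_set_pref_antipodal noSU CS AU AC.
have /andP [AT BS] := not_dec_set_pref noST AS BT AB.
have /andP [BU _] := not_dec_set_pref_antipodal noSU BS AU AB.
by move: notBoth; rewrite !inE AU AT BU BT.
Qed.

Lemma admissible_remove m (Adm : {set judgment m}) (P : profile m) (i : nat) :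
  admissible_profile Adm P -> admissible_profile Adm P.[~ i].
Proof. by move=> HP k J; rewrite fnd_rem1; case: (k != i) => //; apply: HP. Qed.

Lemma admissible_update m (Adm : {set judgment m}) (P : profile m) (i : nat)
    (J : judgment m) :
  admissible_profile Adm P -> J \in Adm -> admissible_profile Adm P.[i <- J].
Proof.
by move=> HP JAdm k J'; rewrite fnd_set; case: (k == i) => [[<-] | ] //; apply: HP.
Qed.

Theorem theorem1 (Ag : Type) (num : Ag -> nat)
  (adm : forall a, {set judgment (num a)})
  (F : forall a, profile (num a) -> {set judgment (num a)}) :
  (forall a, adm a != set0) ->
  is_rule adm F ->
  participation adm F ->
  antipodal_sp adm F.
Proof.
move=> _ isRule partF a P i Ji HP Pi antiAdm.
set Q := P.[i <- antipodal Ji].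
have HQ : admissible_profile (adm a) Q := admissible_update HP antiAdm.
have Qi : Q.[? i] = Some (antipodal Ji) by rewrite fnd_set eqxx.
have Qminus : Q.[~ i] = P.[~ i] by rewrite remf1_set eqxx.
have HPminus : admissible_profile (adm a) P.[~ i] := admissible_remove HP.
have [SneF _] := isRule a _ HPminus.
apply: (no_pref_through_antipode SneF).
- exact: partF HP Pi.
- by rewrite -Qminus; apply: partF HQ Qi.
Qed.
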